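(* The direct product $\mathbb{N}\times\mathbb{N}$ contains uncountably many pairwise non-isomorphic subsemigroups.
   Context: $\mathbb{N}=\{1,2,3,\dots\}$ denotes the free monogenic semigroup, i.e. the positive integers under addition; $\mathbb{N}\times\mathbb{N}$ is the direct product with componentwise addition. *)

(* N = {1,2,3,...} under addition; N x N with componentwise addition.
   Elements of N x N are represented as pairs of Rocq naturals with both
   components >= 1; subsets are predicates on nat * nat. *)
From Stdlib Require Import Arith.

Definition inNN (p : nat * nat) : Prop := 1 <= fst p /\ 1 <= snd p.

Definition addp (p q : nat * nat) : nat * nat := (fst p + fst q, snd p + snd q).

Definition subsemigroup (S : nat * nat -> Prop) : Prop :=
  (exists p, S p) /\
  (forall p, S p -> inNN p) /\
  (forall p q, S p -> S q -> S (addp p q)).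

Definition isomorphic (S T : nat * nat -> Prop) : Prop :=
  exists f g : nat * nat -> nat * nat,
    (forall p, S p -> T (f p)) /\
    (forall q, T q -> S (g q)) /\
    (forall p, S p -> g (f p) = p) /\
    (forall q, T q -> f (g q) = q) /\
    (forall p q, S p -> S q -> f (addp p q) = addp (f p) (f q)).

Definition same_set (S T : nat * nat -> Prop) : Prop := forall p, S p <-> T p.

Definition countable_family (F : (nat * nat -> Prop) -> Prop) : Prop :=
  exists e : nat -> (nat * nat -> Prop), forall S, F S -> exists n, same_set (e n) S.

(* For s ⊆ ℕ let S_s = {(a,b) : a ≥ 1, b ≥ 2} ∪ {(n+3,1) : n ∈ s}.  Every additive
   map on the core {a ≥ 1, b ≥ 2} is the restriction of a linear map, so an
   isomorphism S_s ≅ S_t is given by a nonnegative integer matrix whose inverse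
   is again nonnegative, i.e. by a permutation matrix.  The coordinate swap
   sends (1,2) to (2,1) ∉ S_t, so the isomorphism is the identity and s = t.
   A Cantor diagonal argument shows that the family (S_s) is uncountable. *)
From Stdlib Require Import Arith ZArith Lia.

Definition core (p : nat * nat) : Prop := 1 <= fst p /\ 2 <= snd p.

(* The markers start at abscissa 3 so that (2,1), the image of (1,2) under the
   coordinate swap, never lies in [semigroup_of t]. *)
Definition semigroup_of (s : nat -> Prop) (p : nat * nat) : Prop :=
  core p \/ exists n, s n /\ p = (n + 3, 1).

Lemma subsemigroup_semigroup_of (s : nat -> Prop) : subsemigroup (semigroup_of s).
Proof.
  split; [|split].
  - exists (1, 2); left; unfold core; simpl; lia.
  - intros p [hp | (n & _ & ->)]; unfold inNN, core in *; simpl; lia.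
  - intros [a b] [c d] hp hq; left.
    destruct hp as [hp | (n & _ & [= -> ->])], hq as [hq | (m & _ & [= -> ->])];
      unfold core, addp in *; simpl in *; lia.
Qed.

Lemma semigroup_of_marker (s : nat -> Prop) (n : nat) :
  semigroup_of s (n + 3, 1) <-> s n.
Proof.
  split.
  - intros [[_ h] | (m & hm & [= e])]; simpl in *; [lia|].
    now replace n with m by lia.
  - intros hn; right; now exists n.
Qed.

Lemma semigroup_of_not_2_1 (s : nat -> Prop) : ~ semigroup_of s (2, 1).
Proof. intros [[_ h] | (n & _ & [= e])]; simpl in *; lia. Qed.

Definition form (x y : Z) (p : nat * nat) : Z :=
  (Z.of_nat (fst p) * x + Z.of_nat (snd p) * y)%Z.

Lemma form_addp (x y : Z) (p q : nat * nat) :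
  form x y (addp p q) = (form x y p + form x y q)%Z.
Proof. destruct p, q; unfold form, addp; simpl; lia. Qed.

Definition additive_on (S : nat * nat -> Prop) (phi : nat * nat -> Z) : Prop :=
  forall p q, S p -> S q -> phi (addp p q) = (phi p + phi q)%Z.

Lemma additive_on_core_eq0 (psi : nat * nat -> Z) :
  additive_on core psi -> psi (2, 2) = psi (1, 2) -> psi (1, 3) = psi (1, 2) ->
  forall p, core p -> psi p = 0%Z.
Proof.
  intros add h22 h13.
  assert (core_ab : forall a b, 1 <= a -> 2 <= b -> core (a, b)) by (intros; split; auto).
  (* (a,b) + (2,2) = (a+1,b) + (1,2): psi is invariant under unit translations,
     hence constant on the core, and the constant c satisfies c = 2c. *)
  assert (step_fst : forall a b, core (a, b) -> psi (S a, b) = psi (a, b)).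
  { intros a b [ha hb]; simpl in ha, hb.
    pose proof (add (a, b) (2, 2) ltac:(apply core_ab; lia) ltac:(apply core_ab; lia)) as e1.
    pose proof (add (S a, b) (1, 2) ltac:(apply core_ab; lia) ltac:(apply core_ab; lia)) as e2.
    replace (addp (S a, b) (1, 2)) with (addp (a, b) (2, 2)) in e2
      by (unfold addp; simpl; f_equal; lia).
    lia. }
  assert (step_snd : forall a b, core (a, b) -> psi (a, S b) = psi (a, b)).
  { intros a b [ha hb]; simpl in ha, hb.
    pose proof (add (a, b) (1, 3) ltac:(apply core_ab; lia) ltac:(apply core_ab; lia)) as e1.
    pose proof (add (a, S b) (1, 2) ltac:(apply core_ab; lia) ltac:(apply core_ab; lia)) as e2.
    replace (addp (a, S b) (1, 2)) with (addp (a, b) (1, 3)) in e2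
      by (unfold addp; simpl; f_equal; lia).
    lia. }
  assert (flat : forall k j, psi (1 + k, 2 + j) = psi (1, 2)).
  { induction k as [|k IHk]; intro j.
    - induction j as [|j IHj]; [reflexivity|].
      rewrite Nat.add_succ_r, step_snd by (apply core_ab; lia); exact IHj.
    - rewrite Nat.add_succ_r, step_fst by (apply core_ab; lia); apply IHk. }
  assert (zero : psi (1, 2) = 0%Z).
  { pose proof (add (1, 2) (1, 2) ltac:(apply core_ab; lia) ltac:(apply core_ab; lia)) as e.
    pose proof (flat 1 2) as e'; unfold addp in e; cbn in e, e'; lia. }
  intros [a b] [ha hb]; simpl in ha, hb.
  replace a with (1 + (a - 1)) by lia; replace b with (2 + (b - 2)) by lia.
  now rewrite flat.
Qed.

Lemma additive_on_core_form (phi : nat * nat -> Z) :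
  additive_on core phi ->
  forall p, core p ->
    phi p = form (phi (2, 2) - phi (1, 2)) (phi (1, 3) - phi (1, 2)) p.
Proof.
  intros add p hp.
  set (x := (phi (2, 2)%nat - phi (1, 2)%nat)%Z); set (y := (phi (1, 3)%nat - phi (1, 2)%nat)%Z).
  enough (h : (phi p - form x y p)%Z = 0%Z) by lia.
  apply (additive_on_core_eq0 (fun p => phi p - form x y p)%Z); auto.
  - intros q r hq hr; rewrite add, form_addp by assumption; lia.
  - unfold x, y, form; cbn [fst snd]; lia.
  - unfold x, y, form; cbn [fst snd]; lia.
Qed.

Lemma additive_on_form (S : nat * nat -> Prop) (phi : nat * nat -> Z) :
  (forall p, core p -> S p) -> (forall p, S p -> inNN p) -> additive_on S phi ->
  exists x y, forall p, S p -> phi p = form x y p.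
Proof.
  intros hcore hNN add.
  assert (core_form : forall p, core p ->
            phi p = form (phi (2, 2) - phi (1, 2)) (phi (1, 3) - phi (1, 2)) p).
  { apply additive_on_core_form; intros p q hp hq; apply add; auto. }
  eexists; eexists; intros p hp.
  assert (core12 : core (1, 2)) by (split; simpl; lia).
  assert (hsum : core (addp p (1, 2))).
  { destruct (hNN p hp); unfold core, addp; simpl; lia. }
  pose proof (add p (1, 2) hp (hcore _ core12)) as e.
  rewrite core_form, form_addp, <- (core_form (1, 2)) in e by assumption.
  apply Z.add_cancel_r with (phi (1, 2)); symmetry; exact e.
Qed.

Lemma form_coeffs_nonneg (x y : Z) :
  (forall p, core p -> 0 <= form x y p)%Z -> (0 <= x /\ 0 <= y)%Z.
Proof.
  intros h; unfold form in h; split.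
  - destruct (Z_lt_le_dec x 0) as [hx|]; [exfalso|assumption].
    specialize (h (Z.to_nat (2 * Z.abs y) + 1, 2)%nat ltac:(split; simpl; lia)).
    cbn [fst snd] in h; rewrite Nat2Z.inj_add, Z2Nat.id in h by lia; nia.
  - destruct (Z_lt_le_dec y 0) as [hy|]; [exfalso|assumption].
    specialize (h (1, Z.to_nat (Z.abs x) + 2)%nat ltac:(split; simpl; lia)).
    cbn [fst snd] in h; rewrite Nat2Z.inj_add, Z2Nat.id in h by lia; nia.
Qed.

Definition linear_on (S : nat * nat -> Prop) (h : nat * nat -> nat * nat)
    (a b c d : Z) : Prop :=
  forall p, S p -> Z.of_nat (fst (h p)) = form a b p /\ Z.of_nat (snd (h p)) = form c d p.

Lemma additive_map_linear (S : nat * nat -> Prop) (h : nat * nat -> nat * nat) :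
  (forall p, core p -> S p) -> (forall p, S p -> inNN p) ->
  (forall p q, S p -> S q -> h (addp p q) = addp (h p) (h q)) ->
  exists a b c d, (0 <= a /\ 0 <= b /\ 0 <= c /\ 0 <= d)%Z /\ linear_on S h a b c d.
Proof.
  intros hcore hNN hadd.
  destruct (additive_on_form S (fun p => Z.of_nat (fst (h p))) hcore hNN) as (a & b & ha).
  { intros p q hp hq; rewrite hadd by assumption; unfold addp; simpl; lia. }
  destruct (additive_on_form S (fun p => Z.of_nat (snd (h p))) hcore hNN) as (c & d & hc).
  { intros p q hp hq; rewrite hadd by assumption; unfold addp; simpl; lia. }
  destruct (form_coeffs_nonneg a b) as [a0 b0].
  { intros p hp; rewrite <- ha by auto; lia. }
  destruct (form_coeffs_nonneg c d) as [c0 d0].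
  { intros p hp; rewrite <- hc by auto; lia. }
  exists a, b, c, d; split; [auto|].
  intros p hp; split; auto.
Qed.

Lemma nonneg_inverse_is_permutation (a b c d a' b' c' d' : Z) :
  (0 <= a /\ 0 <= b /\ 0 <= c /\ 0 <= d)%Z ->
  (0 <= a' /\ 0 <= b' /\ 0 <= c' /\ 0 <= d')%Z ->
  (a' * a + b' * c = 1 /\ a' * b + b' * d = 0 /\
   c' * a + d' * c = 0 /\ c' * b + d' * d = 1)%Z ->
  (a = 1 /\ b = 0 /\ c = 0 /\ d = 1 \/ a = 0 /\ b = 1 /\ c = 1 /\ d = 0)%Z.
Proof.
  intros (a0 & b0 & c0 & d0) (a0' & b0' & c0' & d0') (e11 & e12 & e21 & e22).
  assert (0 <= a' * a /\ 0 <= b' * c /\ 0 <= a' * b /\ 0 <= b' * d)%Z as (?&?&?&?) by lia.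
  assert (0 <= c' * a /\ 0 <= d' * c /\ 0 <= c' * b /\ 0 <= d' * d)%Z as (?&?&?&?) by lia.
  destruct (Z.eq_dec (a' * a) 1) as [h|h].
  - destruct (Z.eq_mul_1_nonneg a' a ltac:(lia) h) as [-> ->].
    assert (d' * d = 1)%Z as h' by nia.
    destruct (Z.eq_mul_1_nonneg d' d ltac:(lia) h') as [-> ->].
    left; nia.
  - assert (b' * c = 1)%Z as h' by lia.
    destruct (Z.eq_mul_1_nonneg b' c ltac:(lia) h') as [-> ->].
    assert (c' * b = 1)%Z as h'' by nia.
    destruct (Z.eq_mul_1_nonneg c' b ltac:(lia) h'') as [-> ->].
    right; nia.
Qed.

Lemma isomorphism_inverse_additive (S T : nat * nat -> Prop) (f g : nat * nat -> nat * nat) :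
  (forall p q, S p -> S q -> S (addp p q)) ->
  (forall q, T q -> S (g q)) -> (forall p, S p -> g (f p) = p) ->
  (forall q, T q -> f (g q) = q) ->
  (forall p q, S p -> S q -> f (addp p q) = addp (f p) (f q)) ->
  forall p q, T p -> T q -> g (addp p q) = addp (g p) (g q).
Proof.
  intros hcl hg hgf hfg hadd p q hp hq.
  rewrite <- (hfg p), <- (hfg q), <- hadd by auto.
  rewrite !hgf by auto; reflexivity.
Qed.

Lemma isomorphism_semigroup_of_id (s t : nat -> Prop) (f g : nat * nat -> nat * nat) :
  (forall p, semigroup_of s p -> semigroup_of t (f p)) ->
  (forall p, semigroup_of s p -> g (f p) = p) ->
  (forall p q, semigroup_of s p -> semigroup_of s q -> f (addp p q) = addp (f p) (f q)) ->
  (forall p q, semigroup_of t p -> semigroup_of t q -> g (addp p q) = addp (g p) (g q)) ->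
  forall p, semigroup_of s p -> f p = p.
Proof.
  intros hf hgf fadd gadd.
  assert (hcore : forall r p, core p -> semigroup_of r p) by (now left).
  assert (hNN : forall r p, semigroup_of r p -> inNN p)
    by (intro r; apply subsemigroup_semigroup_of).
  destruct (additive_map_linear _ f (hcore s) (hNN s) fadd) as (a & b & c & d & nn & hl).
  destruct (additive_map_linear _ g (hcore t) (hNN t) gadd) as (a' & b' & c' & d' & nn' & hl').
  assert (compose : forall p, semigroup_of s p ->
    Z.of_nat (fst p) = (form a b p * a' + form c d p * b')%Z /\
    Z.of_nat (snd p) = (form a b p * c' + form c d p * d')%Z).
  { intros p hp.
    destruct (hl p hp) as [e1 e2], (hl' (f p) (hf p hp)) as [e3 e4].
    rewrite hgf in e3, e4 by assumption.
    unfold form in e3, e4; rewrite e1, e2 in e3, e4; split; assumption. }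
  (* g o f = id at (1,2) and (2,2) says that the two matrices are mutually inverse. *)
  destruct (compose (1, 2) ltac:(apply hcore; split; simpl; lia)) as [e1 e2].
  destruct (compose (2, 2) ltac:(apply hcore; split; simpl; lia)) as [e3 e4].
  unfold form in e1, e2, e3, e4; cbn [fst snd] in e1, e2, e3, e4.
  destruct (nonneg_inverse_is_permutation a b c d a' b' c' d' nn nn' ltac:(nia))
    as [(-> & -> & -> & ->) | (-> & -> & -> & ->)].
  - intros [u v] hp; destruct (hl _ hp) as [h1 h2].
    destruct (f (u, v)) as [x y]; unfold form in h1, h2; simpl in h1, h2.
    f_equal; lia.
  - exfalso.
    assert (h12 : semigroup_of s (1, 2)) by (apply hcore; split; simpl; lia).
    apply (semigroup_of_not_2_1 t).
    destruct (hl _ h12) as [h1 h2]; pose proof (hf _ h12) as ht.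
    destruct (f (1, 2)) as [x y]; unfold form in h1, h2; simpl in h1, h2.
    now replace x with 2 in ht by lia; replace y with 1 in ht by lia.
Qed.

Lemma isomorphic_semigroup_of_same_set (s t : nat -> Prop) :
  isomorphic (semigroup_of s) (semigroup_of t) -> same_set (semigroup_of s) (semigroup_of t).
Proof.
  intros (f & g & hf & hg & hgf & hfg & hadd).
  destruct (subsemigroup_semigroup_of s) as (_ & _ & hcl).
  pose proof (isomorphism_inverse_additive _ _ f g hcl hg hgf hfg hadd) as gadd.
  pose proof (isomorphism_semigroup_of_id s t f g hf hgf hadd gadd) as fid.
  intro p; split; intro hp.
  - rewrite <- (fid p hp); auto.
  - rewrite <- (hfg p hp), fid; auto.
Qed.

Theorem theoremA :
  exists F : (nat * nat -> Prop) -> Prop,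
    (forall S, F S -> subsemigroup S) /\
    (forall S T, F S -> F T -> ~ same_set S T -> ~ isomorphic S T) /\
    ~ countable_family F.
Proof.
  exists (fun S => exists s, S = semigroup_of s); split; [|split].
  - intros S [s ->]; apply subsemigroup_semigroup_of.
  - intros S T [s ->] [t ->] hne hiso.
    exact (hne (isomorphic_semigroup_of_same_set s t hiso)).
  - intros [e he].
    set (diagonal := fun n => ~ e n (n + 3, 1)).
    destruct (he (semigroup_of diagonal)) as [n hn]; [now exists diagonal|].
    specialize (hn (n + 3, 1)); rewrite semigroup_of_marker in hn.
    unfold diagonal in hn; tauto.
Qed.
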